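(* Let $r,s,t>1$ and $M>0$ be real numbers, set $c = 4rst - 2r^2 - 2s^2 - 2t^2 + 1$ and assume $c>1$. Put $\tilde M = M\,\frac{s\sqrt{c^2-1} + (c-1)\sqrt{s^2-1}}{c-1}$. Define the following elements of $\mathrm{SL}(2,\mathbb{R})$: $$\rho = r\mathbf{1} + \frac{r(c+1)}{\sqrt{c^2-1}}\mathbf{I} - \frac{\tilde M(2rs - t + (c+\sqrt{c^2-1})t)}{2(c-1+2s^2)}(\mathbf{J}+\mathbf{K}) + \frac{2rs-t+(c-\sqrt{c^2-1})t}{2\tilde M(c-1)}(\mathbf{J}-\mathbf{K}),$$ $$\sigma = s\mathbf{1} - \frac{s(c+1)}{\sqrt{c^2-1}}\mathbf{I} + \frac{\tilde M}{2}(\mathbf{J}+\mathbf{K}) - \frac{c-1+2s^2}{2\tilde M(c-1)}(\mathbf{J}-\mathbf{K}),$$ and let $\rho'$, $\sigma'$ be obtained from $\rho$, $\sigma$ respectively by changing the signs of the coefficients of $(\mathbf{J}+\mathbf{K})$ and $(\mathbf{J}-\mathbf{K})$ (leaving the coefficients of $\mathbf{1}$ and $\mathbf{I}$ unchanged). Let $\mathcal{S}$ be the genus 2 hyperbolic surface obtained by doubling the once-punctured torus determined by $\rho,\sigma$, whose fundamental group is represented by the group generated by (the images in $\mathrm{PSL}(2,\mathbb{R})$ of) $\rho,\sigma,\rho',\sigma'$. Then the trace field of $\mathcal{S}$, i.e. $\mathbb{Q}(\{\mathrm{tr}\,\gamma\})$ where $\gamma$ ranges over the preimage in $\mathrm{SL}(2,\mathbb{R})$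 of this group, is equal to $\mathbb{Q}(r,s,t)$.
   Context: $\mathbf{1} = \begin{pmatrix}1&0\\0&1\end{pmatrix}$, $\mathbf{I} = \begin{pmatrix}1&0\\0&-1\end{pmatrix}$, $\mathbf{J} = \begin{pmatrix}0&1\\1&0\end{pmatrix}$, $\mathbf{K} = \begin{pmatrix}0&1\\-1&0\end{pmatrix}$. With these parameters $\rho,\sigma$ generate a Fuchsian group uniformizing a hyperbolic once-punctured torus $\mathcal{T}$ with $\mathrm{tr}\,\rho=2r$, $\mathrm{tr}\,\sigma=2s$, $\mathrm{tr}\,\rho\sigma=2t$, $\mathrm{tr}\,[\rho,\sigma] = -2c$; $\rho',\sigma'$ correspond to the mirror image of $\mathcal{T}$ (the Möbius map $\frac{az+b}{cz+d}$ is replaced by $\frac{az-b}{-cz+d}$), and $\mathcal{S}$ is obtained by gluing $\mathcal{T}$ and its mirror image along their common boundary. *)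

From HB Require Import structures.
From mathcomp Require Import all_boot all_order all_algebra.
From mathcomp Require Import reals.
Set Implicit Arguments. Unset Strict Implicit. Unset Printing Implicit Defensive.
Import Order.TTheory GRing.Theory Num.Theory.
Local Open Scope ring_scope.

Section Defs.
Variable R : realType.

Definition mk2 (a b c d : R) : 'M[R]_2 :=
  \matrix_(i < 2, j < 2)
    (if i == 0 :> nat then (if j == 0 :> nat then a else b)
     else (if j == 0 :> nat then c else d)).

Definition mat1 : 'M[R]_2 := mk2 1 0 0 1.
Definition matI : 'M[R]_2 := mk2 1 0 0 (-1).
Definition matJ : 'M[R]_2 := mk2 0 1 1 0.
Definition matK : 'M[R]_2 := mk2 0 1 (-1) 0.

Definition qmat (a b u v : R) : 'M[R]_2 :=
  a *: mat1 + b *: matI + u *: (matJ + matK) + v *: (matJ - matK).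

Definition cpar (r s t : R) : R :=
  4 * r * s * t - 2 * r ^+ 2 - 2 * s ^+ 2 - 2 * t ^+ 2 + 1.

Definition Mtilde (r s t M : R) : R :=
  let c := cpar r s t in
  M * ((s * Num.sqrt (c ^+ 2 - 1) + (c - 1) * Num.sqrt (s ^+ 2 - 1)) / (c - 1)).

Definition rho_coeffs (r s t M : R) : R * R * R * R :=
  let c := cpar r s t in
  let q := Num.sqrt (c ^+ 2 - 1) in
  let Mt := Mtilde r s t M in
  (r, r * (c + 1) / q,
   - (Mt * (2 * r * s - t + (c + q) * t) / (2 * (c - 1 + 2 * s ^+ 2))),
   (2 * r * s - t + (c - q) * t) / (2 * Mt * (c - 1))).

Definition sigma_coeffs (r s t M : R) : R * R * R * R :=
  let c := cpar r s t in
  let q := Num.sqrt (c ^+ 2 - 1) in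
  let Mt := Mtilde r s t M in
  (s, - (s * (c + 1) / q), Mt / 2, - ((c - 1 + 2 * s ^+ 2) / (2 * Mt * (c - 1)))).

Definition of_coeffs (x : R * R * R * R) : 'M[R]_2 :=
  let: (a, b, u, v) := x in qmat a b u v.
Definition of_coeffs' (x : R * R * R * R) : 'M[R]_2 :=
  let: (a, b, u, v) := x in qmat a b (- u) (- v).

Definition rho r s t M := of_coeffs (rho_coeffs r s t M).
Definition sigma r s t M := of_coeffs (sigma_coeffs r s t M).
Definition rho' r s t M := of_coeffs' (rho_coeffs r s t M).
Definition sigma' r s t M := of_coeffs' (sigma_coeffs r s t M).

Inductive gen_group (S : 'M[R]_2 -> Prop) : 'M[R]_2 -> Prop :=
  | gg_gen g : S g -> gen_group S g
  | gg_one : gen_group S 1%:M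
  | gg_mul g h : gen_group S g -> gen_group S h -> gen_group S (g *m h)
  | gg_inv g : gen_group S g -> gen_group S (invmx g).

Inductive gen_field (S : R -> Prop) : R -> Prop :=
  | gf_gen x : S x -> gen_field S x
  | gf_one : gen_field S 1
  | gf_add x y : gen_field S x -> gen_field S y -> gen_field S (x + y)
  | gf_opp x : gen_field S x -> gen_field S (- x)
  | gf_mul x y : gen_field S x -> gen_field S y -> gen_field S (x * y)
  | gf_inv x : gen_field S x -> x != 0 -> gen_field S (x^-1).

(* preimage in SL(2,R) of the group generated by the images in PSL(2,R)
   of rho, sigma, rho', sigma' : generated by these and -1 *)
Definition surface_group (r s t M : R) : 'M[R]_2 -> Prop :=
  gen_group (fun g => g = rho r s t M \/ g = sigma r s t M \/
                      g = rho' r s t M \/ g = sigma' r s t M \/ g = - 1%:M).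

Definition trace_field (r s t M : R) : R -> Prop :=
  gen_field (fun x => exists g, surface_group r s t M g /\ x = \tr g).

End Defs.

From HB Require Import structures.
From mathcomp Require Import all_boot all_order all_algebra.
From mathcomp Require Import reals ring lra.
Set Implicit Arguments. Unset Strict Implicit. Unset Printing Implicit Defensive.
Import Order.TTheory GRing.Theory Num.Theory.
Local Open Scope ring_scope.

(* With q = sqrt(c^2 - 1), each of rho, sigma, rho', sigma' and -1 has the
   shape [a + b q, m (g + d q); e (-g + d q), a - b q] with m = M~,
   e = (c - 1 + 2 s^2) / (M~ (c - 1)) and a, b, g, d in K = Q(r, s, t).  Since q^2 and m e lie in K,
   such matrices are closed under products and inverses, so every element of
   the group has trace 2a in K.  Conversely tr rho = 2r, tr sigma = 2s and
   tr (rho sigma) = 2t. *)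

Section Mk2.
Variable R : realType.
Implicit Types a b c d : R.

Lemma mk2_inj a b c d a' b' c' d' :
  mk2 a b c d = mk2 a' b' c' d' -> [/\ a = a', b = b', c = c' & d = d'].
Proof.
move=> E; have entry i j := congr1 (fun A : 'M[R]_2 => A i j) E.
by move: (entry 0 0) (entry 0 1) (entry 1 0) (entry 1 1); rewrite /= !mxE.
Qed.

Lemma mulmx_mk2 a b c d a' b' c' d' :
  mk2 a b c d *m mk2 a' b' c' d' =
  mk2 (a * a' + b * c') (a * b' + b * d') (c * a' + d * c') (c * b' + d * d').
Proof.
apply/matrixP => i j; rewrite !mxE !big_ord_recr big_ord0 /= !mxE /= add0r.
by case: i => [[|[|i]] Hi] //; case: j => [[|[|j]] Hj].
Qed.

Lemma mxtrace_mk2 a b c d : \tr (mk2 a b c d) = a + d.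
Proof. by rewrite /mxtrace !big_ord_recr big_ord0 /= !mxE /= add0r. Qed.

Lemma det_mk2 a b c d : \det (mk2 a b c d) = a * d - b * c.
Proof.
rewrite (expand_det_row _ 0) !big_ord_recr big_ord0 /= add0r /cofactor.
by rewrite !det_mx11 !mxE /= addn0 add0n expr0 expr1; ring.
Qed.

Lemma scalar_mk2 (x : R) : x%:M = mk2 x 0 0 x.
Proof.
apply/matrixP => i j; rewrite !mxE.
by case: i => [[|[|i]] Hi] //; case: j => [[|[|j]] Hj].
Qed.

Lemma qmatE a b u v : qmat a b u v = mk2 (a + b) (u + u) (v + v) (a - b).
Proof.
apply/matrixP => i j; rewrite !mxE.
by case: i => [[|[|i]] Hi] //; case: j => [[|[|j]] Hj] //=; ring.
Qed.

Lemma invmx_mk2 a b c d (D := a * d - b * c) :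
  D != 0 -> invmx (mk2 a b c d) = mk2 (d / D) (- b / D) (- c / D) (a / D).
Proof.
move=> D_neq0; set B := mk2 (d / D) _ _ _.
have AB1 : mk2 a b c d *m B = 1%:M.
  by rewrite mulmx_mk2 scalar_mk2; congr mk2; rewrite /D in D_neq0 *; field.
have [A_unit _] := mulmx1_unit AB1.
by rewrite -[invmx _]mulmx1 -AB1 mulmxA mulVmx // mul1mx.
Qed.

End Mk2.

Section GenField.
Variables (R : realType) (S : R -> Prop).
Local Notation F := (gen_field S).

Lemma gen_field0 : F 0.
Proof. by rewrite -(addrN 1); apply: gf_add; [|apply: gf_opp]; apply: gf_one. Qed.

Lemma gen_fieldV x : F x -> F x^-1.
Proof.
move=> Fx; have [->|x_neq0] := eqVneq x 0; last exact: gf_inv.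
by rewrite invr0; exact: gen_field0.
Qed.

Lemma gen_fieldX x n : F x -> F (x ^+ n).
Proof.
move=> Fx; elim: n => [|n IHn]; first exact: gf_one.
by rewrite exprS; exact: gf_mul.
Qed.

Lemma gen_field_nat n : F n%:R.
Proof.
elim: n => [|n IHn]; first exact: gen_field0.
by rewrite -addn1 natrD; apply: gf_add => //; exact: gf_one.
Qed.

Lemma gen_field_min (T : R -> Prop) x :
  (forall y, S y -> gen_field T y) -> F x -> gen_field T x.
Proof.
move=> ST; elim=> {x} [y /ST //||y z _ Ty _ Tz|y _ Ty|y z _ Ty _ Tz|y _ Ty y_neq0].
- exact: gf_one.
- exact: gf_add.
- exact: gf_opp.
- exact: gf_mul.
- exact: gf_inv.
Qed.

End GenField.

Ltac gen_field_closure :=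
  repeat first [ assumption | apply: gf_one | apply: gen_field0
               | apply: gen_field_nat | apply: gf_add | apply: gf_opp
               | apply: gf_mul | apply: gen_fieldV | apply: gen_fieldX ].

Section Twisted.
Variables (R : realType) (q m e : R).
Implicit Types a b g d : R.

Definition twisted_mx a b g d : 'M[R]_2 :=
  mk2 (a + b * q) (m * (g + d * q)) (e * (- g + d * q)) (a - b * q).

Lemma twisted_mxM a b g d a' b' g' d' :
  twisted_mx a b g d *m twisted_mx a' b' g' d' =
  twisted_mx (a * a' + b * b' * q ^+ 2 + m * e * (d * d' * q ^+ 2 - g * g'))
             (a * b' + b * a' + m * e * (g * d' - d * g'))
             (a * g' + g * a' + q ^+ 2 * (b * d' - d * b'))
             (a * d' + d * a' + b * g' - g * b').
Proof. by rewrite mulmx_mk2; congr mk2; ring. Qed.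

Lemma mxtrace_twisted a b g d : \tr (twisted_mx a b g d) = 2 * a.
Proof. by rewrite mxtrace_mk2; ring. Qed.

Lemma det_twisted a b g d :
  \det (twisted_mx a b g d) =
  a ^+ 2 - b ^+ 2 * q ^+ 2 + m * e * (g ^+ 2 - d ^+ 2 * q ^+ 2).
Proof. by rewrite det_mk2; ring. Qed.

Lemma invmx_twisted a b g d (N := \det (twisted_mx a b g d)) :
  N != 0 -> invmx (twisted_mx a b g d) =
            twisted_mx (a / N) (- b / N) (- g / N) (- d / N).
Proof.
rewrite /N det_mk2 => N_neq0; rewrite invmx_mk2 //.
by congr mk2; field.
Qed.

Lemma scalar_twisted (x : R) : x%:M = twisted_mx x 0 0 0.
Proof. by rewrite scalar_mk2; congr mk2; ring. Qed.

Lemma qmat_mirror a b u v a' b' g d :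
  qmat a b u v = twisted_mx a' b' g d ->
  qmat a b (- u) (- v) = twisted_mx a' b' (- g) (- d).
Proof.
rewrite !qmatE => /mk2_inj [-> Eu Ev ->].
by congr mk2; [move: Eu | move: Ev]; lra.
Qed.

End Twisted.

Section TwistedOver.
Variables (R : realType) (S : R -> Prop) (q m e : R).
Local Notation F := (gen_field S).
Hypothesis F_q2 : F (q ^+ 2).
Hypothesis F_me : F (m * e).

Definition twisted_over (X : 'M[R]_2) :=
  exists a b g d, [/\ F a, F b, F g, F d & X = twisted_mx q m e a b g d].

Lemma twisted_over_scalar x : F x -> twisted_over x%:M.
Proof. by exists x, 0, 0, 0; rewrite (scalar_twisted q m e); split; gen_field_closure. Qed.

Lemma twisted_over_mul X Y : twisted_over X -> twisted_over Y -> twisted_over (X *m Y).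
Proof.
move=> [a [b [g [d [Fa Fb Fg Fd ->]]]]] [a' [b' [g' [d' [Fa' Fb' Fg' Fd' ->]]]]].
by rewrite twisted_mxM; do 4 eexists; split; last reflexivity; gen_field_closure.
Qed.

Lemma twisted_over_inv X : twisted_over X -> twisted_over (invmx X).
Proof.
have [X_unit|X_nonunit] := boolP (X \in unitmx); last by rewrite invmx_out.
move=> [a [b [g [d [Fa Fb Fg Fd EX]]]]].
have N_neq0 : \det (twisted_mx q m e a b g d) != 0.
  by rewrite -EX -unitfE -unitmxE.
rewrite EX invmx_twisted //; do 4 eexists; split; last reflexivity;
  rewrite det_twisted; gen_field_closure.
Qed.

Lemma gen_group_twisted_over (G : 'M[R]_2 -> Prop) X :
  (forall Y, G Y -> twisted_over Y) -> gen_group G X -> twisted_over X.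
Proof.
move=> GY; elim=> {X} [Y /GY //||Y Z _ HY _ HZ|Y _ HY].
- by apply: twisted_over_scalar; exact: gf_one.
- exact: twisted_over_mul.
- exact: twisted_over_inv.
Qed.

Lemma mxtrace_twisted_over X : twisted_over X -> F (\tr X).
Proof.
by move=> [a [b [g [d [Fa _ _ _ ->]]]]]; rewrite mxtrace_twisted; gen_field_closure.
Qed.

End TwistedOver.

Section Surface.
Variables (R : realType) (r s t M : R).
Hypothesis s_gt0 : 0 < s.
Hypothesis M_gt0 : 0 < M.
Local Notation c := (cpar r s t).
Hypothesis c_gt1 : 1 < c.

Local Notation rst := (fun y => y = r \/ y = s \/ y = t).
Local Notation K := (gen_field rst).
Local Notation q := (Num.sqrt (c ^+ 2 - 1)).
Local Notation m := (Mtilde r s t M).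
Local Notation D := (c - 1 + 2 * s ^+ 2).
Local Notation e := (D / (m * (c - 1))).

Let K_r : K r. Proof. by apply: gf_gen; left. Qed.
Let K_s : K s. Proof. by apply: gf_gen; right; left. Qed.
Let K_t : K t. Proof. by apply: gf_gen; right; right. Qed.

Let K_c : K c.
Proof. by rewrite /cpar; gen_field_closure. Qed.

Let c2_gt1 : 1 < c ^+ 2.
Proof. by rewrite exprn_egt1. Qed.

Let c1_gt0 : 0 < c - 1.
Proof. by rewrite subr_gt0. Qed.

Let c1_neq0 : c - 1 != 0.
Proof. by rewrite gt_eqF. Qed.

Let sqr_q : q ^+ 2 = c ^+ 2 - 1.
Proof. by rewrite sqr_sqrtr // subr_ge0 ltW. Qed.

Let q_gt0 : 0 < q.
Proof. by rewrite sqrtr_gt0 subr_gt0. Qed.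

Let q_neq0 : q != 0.
Proof. by rewrite gt_eqF. Qed.

Let D_neq0 : D != 0.
Proof. by rewrite gt_eqF // ltr_wpDr // mulr_ge0 ?sqr_ge0. Qed.

Let m_neq0 : m != 0.
Proof.
have num_gt0 : 0 < s * q + (c - 1) * Num.sqrt (s ^+ 2 - 1).
  by rewrite ltr_wpDr ?mulr_gt0 // mulr_ge0 ?sqrtr_ge0 // ltW.
by rewrite gt_eqF // /Mtilde mulr_gt0 // divr_gt0.
Qed.

Let K_q2 : K (q ^+ 2).
Proof. by rewrite sqr_q; gen_field_closure. Qed.

Let K_me : K (m * e).
Proof.
rewrite (_ : m * e = D / (c - 1)); last by field; rewrite m_neq0 c1_neq0.
by gen_field_closure.
Qed.

Local Notation b_rho := (r * (c + 1) / q ^+ 2).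
Local Notation g_rho := (- (2 * r * s - t + c * t) / D).
Local Notation d_rho := (- t / D).
Local Notation b_sigma := (- (s * (c + 1) / q ^+ 2)).

Lemma rho_twisted : rho r s t M = twisted_mx q m e r b_rho g_rho d_rho.
Proof.
rewrite /rho /of_coeffs /rho_coeffs /= qmatE.
by congr mk2; field; rewrite ?q_neq0 ?D_neq0 ?c1_neq0 ?m_neq0.
Qed.

Lemma sigma_twisted : sigma r s t M = twisted_mx q m e s b_sigma 1 0.
Proof.
rewrite /sigma /of_coeffs /sigma_coeffs /= qmatE.
by congr mk2; field; rewrite ?q_neq0 ?D_neq0 ?c1_neq0 ?m_neq0.
Qed.

Lemma rho'_twisted : rho' r s t M = twisted_mx q m e r b_rho (- g_rho) (- d_rho).
Proof. exact: (qmat_mirror rho_twisted). Qed.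

Lemma sigma'_twisted : sigma' r s t M = twisted_mx q m e s b_sigma (- 1) (- 0).
Proof. exact: (qmat_mirror sigma_twisted). Qed.

Lemma surface_group_twisted_over X :
  surface_group r s t M X -> twisted_over rst q m e X.
Proof.
rewrite /surface_group.
apply: (gen_group_twisted_over K_q2 K_me) => Y [->|[->|[->|[->|->]]]].
- by rewrite rho_twisted; do 4 eexists; split; last reflexivity;
    gen_field_closure.
- by rewrite sigma_twisted; do 4 eexists; split; last reflexivity;
    gen_field_closure.
- by rewrite rho'_twisted; do 4 eexists; split; last reflexivity;
    gen_field_closure.
- by rewrite sigma'_twisted; do 4 eexists; split; last reflexivity;
    gen_field_closure.
- by rewrite -raddfN /=; apply: twisted_over_scalar; gen_field_closure.
Qed.

Lemma trace_field_sub x : trace_field r s t M x -> K x.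
Proof.
apply: gen_field_min => _ [X [GX ->]].
exact: mxtrace_twisted_over (surface_group_twisted_over GX).
Qed.

Lemma surface_group_rho : surface_group r s t M (rho r s t M).
Proof. by apply: gg_gen; left. Qed.

Lemma surface_group_sigma : surface_group r s t M (sigma r s t M).
Proof. by apply: gg_gen; right; left. Qed.

Lemma surface_group_rho_sigma :
  surface_group r s t M (rho r s t M *m sigma r s t M).
Proof. exact: gg_mul surface_group_rho surface_group_sigma. Qed.

Lemma trace_field_half_mxtrace X y :
  surface_group r s t M X -> \tr X = 2 * y -> trace_field r s t M y.
Proof.
move=> GX trX; rewrite -[y](mulKf (_ : 2 != 0)) ?pnatr_eq0 // -trX.
apply: gf_mul; last by apply: gf_gen; exists X.
by apply: gen_fieldV; apply: gen_field_nat.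
Qed.

Lemma mxtrace_rho : \tr (rho r s t M) = 2 * r.
Proof. by rewrite rho_twisted mxtrace_twisted. Qed.

Lemma mxtrace_sigma : \tr (sigma r s t M) = 2 * s.
Proof. by rewrite sigma_twisted mxtrace_twisted. Qed.

Lemma mxtrace_rho_sigma : \tr (rho r s t M *m sigma r s t M) = 2 * t.
Proof.
rewrite rho_twisted sigma_twisted twisted_mxM mxtrace_twisted.
rewrite sqr_q; congr (2 * _).
have c2_neq0 : c ^+ 2 - 1 != 0 by rewrite -sqr_q expf_neq0.
have c_neqN1 : c + 1 != 0 by rewrite gt_eqF // addr_gt0 // (lt_trans ltr01 c_gt1).
by field; rewrite ?c2_neq0 ?c_neqN1 ?D_neq0 ?c1_neq0 ?m_neq0.
Qed.

End Surface.

Theorem theorem2p3 (R : realType) (r s t M : R) :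
  1 < r -> 1 < s -> 1 < t -> 0 < M -> 1 < cpar r s t ->
  forall x : R,
    trace_field r s t M x <-> gen_field (fun y => y = r \/ y = s \/ y = t) x.
Proof.
(* The assumptions 1 < r and 1 < t only make the surface hyperbolic. *)
move=> _ s_gt1 _ M_gt0 c_gt1 x.
have s_gt0 : 0 < s by lra.
split; first exact: trace_field_sub.
apply: gen_field_min => y [->|[->|->]]; apply: trace_field_half_mxtrace.
- exact: surface_group_rho.
- exact: mxtrace_rho.
- exact: surface_group_sigma.
- exact: mxtrace_sigma.
- exact: surface_group_rho_sigma.
- exact: mxtrace_rho_sigma.
Qed.
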